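(* Let $A$ be a vector space with bilinear operations $\cdot,\circ$, and $[x,y]=x\circ y-y\circ x$. (1) If $(A,\cdot,[-,-])$ is a transposed Poisson algebra, $(A,\circ)$ is pre-Lie, and $(-\mathcal{L}^*_{\cdot},\mathcal{L}^*_{\circ},A^* )$ is a representation of the transposed Poisson algebra $(A,\cdot,[-,-])$, then $(A,\cdot,\circ)$ is a TCPD algebra. (2) Conversely, if $(A,\cdot,\circ)$ is a TCPD algebra, then $(A,\cdot,[-,-])$ is a transposed Poisson algebra with representation $(-\mathcal{L}^*_{\cdot},\mathcal{L}^*_{\circ},A^* )$.
   Context: Finite-dimensional spaces, characteristic zero. $\mathcal{L}_\ast(x)y=x\ast y$; for linear $\rho:A\to\mathrm{End}(V)$, $\langle\rho^*(x)v^*,u\rangle=-\langle v^*,\rho(x)u\rangle$. Pre-Lie: $(x\circ y)\circ z-x\circ(y\circ z)=(y\circ x)\circ z-y\circ(x\circ z)$. Transposed Poisson algebra: $(A,\cdot)$ commutative associative, $(A,[-,-])$ Lie, $2z\cdot[x,y]=[z\cdot x,y]+[x,z\cdot y]$. A representation of a transposed Poisson algebra is $(\mu,\rho,V)$ with $\mu(x\cdot y)=\mu(x)\mu(y)$, $\rho([x,y])=[\rho(x),\rho(y)]$, $2\mu(x)\rho(y)=\rho(x\cdot y)+\rho(y)\mu(x)$, $2\mu([x,y])=\rho(x)\mu(y)-\rho(y)\mu(x)$. A TCPD algebra is $(A,\cdot,\circ)$ with $(A,\cdot)$ commutative associative, $(A,\circ)$ pre-Lie, and for all $x,y,z$: $2x\circ(y\cdot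 z)=(z\cdot x)\circ y+z\cdot(x\circ y)$; $2(x\circ y)\cdot z-2(y\circ x)\cdot z=x\cdot(y\circ z)-y\cdot(x\circ z)$; $3y\circ(z\cdot x)-3x\circ(z\cdot y)-(z\cdot x)\circ y+(z\cdot y)\circ x=0$. *)

From HB Require Import structures.
From mathcomp Require Import all_boot all_order all_algebra.
Set Implicit Arguments. Unset Strict Implicit. Unset Printing Implicit Defensive.
Import GRing.Theory.
Local Open Scope ring_scope.

(* Finite-dimensional vector spaces over a field K: A : vectType K.
   The dual space A^* is 'Hom(A, K^o) (linear functionals), with pairing
   <f, u> = f u. *)

Section Defs.
Variable K : fieldType.
Variable A : vectType K.

Definition bilinear_op (op : A -> A -> A) : Prop :=
  (forall x, linear (op x)) /\ (forall y, linear (fun x => op x y)).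

Definition comm_assoc (dot : A -> A -> A) : Prop :=
  (forall x y, dot x y = dot y x) /\
  (forall x y z, dot (dot x y) z = dot x (dot y z)).

Definition is_Lie (br : A -> A -> A) : Prop :=
  (forall x, br x x = 0) /\
  (forall x y z, br x (br y z) + br y (br z x) + br z (br x y) = 0).

Definition is_preLie (circ : A -> A -> A) : Prop :=
  forall x y z, circ (circ x y) z - circ x (circ y z)
              = circ (circ y x) z - circ y (circ x z).

Definition is_TPA (dot br : A -> A -> A) : Prop :=
  comm_assoc dot /\ is_Lie br /\
  (forall x y z, 2%:R *: dot z (br x y) = br (dot z x) y + br x (dot z y)).

Definition is_TPA_rep (V : vectType K) (dot br : A -> A -> A)
  (mu rho : A -> 'End(V)) : Prop :=
  linear mu /\ linear rho /\
  (forall x y, mu (dot x y) = (mu x \o mu y)%VF) /\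
  (forall x y, rho (br x y) = (rho x \o rho y)%VF - (rho y \o rho x)%VF) /\
  (forall x y, 2%:R *: (mu x \o rho y)%VF = rho (dot x y) + (rho y \o mu x)%VF) /\
  (forall x y, 2%:R *: mu (br x y) = (rho x \o mu y)%VF - (rho y \o mu x)%VF).

Definition Lop (op : A -> A -> A) (x : A) : 'End(A) := linfun (op x).

Definition dual_op (rho : A -> 'End(A)) (x : A) : 'End('Hom(A, K^o)) :=
  linfun (fun f : 'Hom(A, K^o) => - (f \o rho x)%VF).

Definition is_TCPD (dot circ : A -> A -> A) : Prop :=
  comm_assoc dot /\ is_preLie circ /\
  (forall x y z, 2%:R *: circ x (dot y z) = circ (dot z x) y + dot z (circ x y)) /\
  (forall x y z, 2%:R *: dot (circ x y) z - 2%:R *: dot (circ y x) z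
                 = dot x (circ y z) - dot y (circ x z)) /\
  (forall x y z, 3%:R *: circ y (dot z x) - 3%:R *: circ x (dot z y)
                 - circ (dot z x) y + circ (dot z y) x = 0).

End Defs.

(* Every axiom of the representation (-L*_., L*_o, A^* ) is the transpose of an
   identity in A, and a vector is determined by the values of all functionals on
   it; so the representation is equivalent to pre-Lie-ness of o together with the
   first two TCPD compatibilities.  Given these, 2 z.[x,y] = 2 yo(zx) - 2 xo(zy),
   and the transposed Poisson identity minus its right-hand side is exactly the
   left-hand side of the third TCPD compatibility. *)
From HB Require Import structures.
From mathcomp Require Import all_boot all_order all_algebra ring.
Set Implicit Arguments. Unset Strict Implicit. Unset Printing Implicit Defensive.
Import GRing.Theory.
Local Open Scope ring_scope.

Lemma linfunE_of (K : fieldType) (aT rT : vectType K) (f : aT -> rT) :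
  linear f -> linfun f =1 f.
Proof. by move=> fL; exact: (lfunE (HB.pack f (GRing.isLinear.Build K aT rT _ f fL))). Qed.

Lemma subr_swap (V : zmodType) (a b c d : V) : a - b = c - d <-> a - c = b - d.
Proof.
suff swap (a' b' c' d' : V) : a' - b' = c' - d' -> a' - c' = b' - d' by split; apply: swap.
by move=> e; rewrite -[a'](subrK b') e addrAC [c' - d']addrC addrK addrC.
Qed.

Lemma bilinear_opBl (K : fieldType) (A : vectType K) (op : A -> A -> A) :
  bilinear_op op -> forall u v w, op (u - v) w = op u w - op v w.
Proof. by move=> opL u v w; exact: (zmod_morphism_linear (opL.2 w)). Qed.

Lemma bilinear_opBr (K : fieldType) (A : vectType K) (op : A -> A -> A) :
  bilinear_op op -> forall u v w, op w (u - v) = op w u - op w v.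
Proof. by move=> opL u v w; exact: (zmod_morphism_linear (opL.1 w)). Qed.

Section DualSpace.
Variables (K : fieldType) (A : vectType K).
Local Notation dual := 'Hom(A, K^o).

Lemma dual_sep (v w : A) : (forall f : dual, f v = f w) -> v = w.
Proof.
move=> vw; apply/eqP; rewrite -subr_eq0; apply/eqP.
rewrite (coord_vbasis (memvf (v - w))); apply: big1 => i _.
have := vw (@linfun _ A K^o (coord (vbasis fullv) i)).
by rewrite !lfunE /= => vw_i; rewrite linearB /= vw_i subrr scale0r.
Qed.

Lemma dual_opE (rho : A -> 'End(A)) x (f : dual) u :
  dual_op rho x f u = - f (rho x u).
Proof.
rewrite /dual_op linfunE_of ?lfun_simp // => a g h.
by rewrite comp_lfunDl -comp_lfunZl opprD scalerN.
Qed.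

Lemma dual_endo_eq2 (c : K) (g1 g2 : A -> A -> 'End(dual)) (lhs rhs : A -> A -> A -> A) :
  c != 0 ->
  (forall x y f u, g1 x y f u = c * f (lhs x y u) :> K) ->
  (forall x y f u, g2 x y f u = c * f (rhs x y u) :> K) ->
  (forall x y, g1 x y = g2 x y) <-> (forall x y u, lhs x y u = rhs x y u).
Proof.
move=> c_neq0 g1E g2E; split=> [g12 x y u | LR x y].
  by apply: dual_sep => f; apply: (mulfI c_neq0); rewrite -g1E -g2E g12.
by apply/lfunP => f; apply/lfunP => u; rewrite g1E g2E LR.
Qed.

Section LeftMultiplication.
Variable op : A -> A -> A.
Hypothesis opL : bilinear_op op.

Lemma dual_LopE x (f : dual) u : dual_op (Lop op) x f u = - f (op x u).
Proof. by rewrite dual_opE /Lop linfunE_of //; exact: opL.1. Qed.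

Lemma dual_Lop_linear : linear (dual_op (Lop op)).
Proof.
move=> a x y; apply/lfunP => f; apply/lfunP => u.
by rewrite !lfun_simp !dual_LopE opL.2 linearD linearZ /= opprD scalerN.
Qed.

Lemma opp_dual_Lop_linear : linear (fun x => - dual_op (Lop op) x).
Proof. by move=> a x y; rewrite /= dual_Lop_linear opprD scalerN. Qed.

End LeftMultiplication.
End DualSpace.

(* Proves an identity between integral combinations of vectors by testing it
   against every functional, which turns it into a ring identity in K. *)
Ltac dual_ring :=
  apply: dual_sep => f; rewrite ?scaler_nat ?(raddfD, raddfB, raddfN, raddf0, raddfMn) /=;
  ring.

Definition lie_bracket {V : zmodType} (circ : V -> V -> V) (x y : V) : V :=
  circ x y - circ y x.

Section TCPD.
Variables (K : fieldType) (A : vectType K) (dot circ : A -> A -> A).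
Hypotheses (dotL : bilinear_op dot) (circL : bilinear_op circ).
Local Notation br := (lie_bracket circ).

Definition tpa_compat := forall x y z,
  2%:R *: dot z (br x y) = br (dot z x) y + br x (dot z y).
Definition tcpd_compat1 := forall x y z,
  2%:R *: circ x (dot y z) = circ (dot z x) y + dot z (circ x y).
Definition tcpd_compat2 := forall x y z,
  2%:R *: dot (circ x y) z - 2%:R *: dot (circ y x) z = dot x (circ y z) - dot y (circ x z).
Definition tcpd_compat3 := forall x y z,
  3%:R *: circ y (dot z x) - 3%:R *: circ x (dot z y) - circ (dot z x) y + circ (dot z y) x = 0.

Lemma preLie_bracketE : is_preLie circ <->
  forall x y u, circ (br x y) u = circ x (circ y u) - circ y (circ x u).
Proof.
split=> PL x y u; last by apply/subr_swap; rewrite -(bilinear_opBl circL) PL.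
by rewrite (bilinear_opBl circL); apply/subr_swap; exact: PL.
Qed.

Lemma preLie_Lie : is_preLie circ -> is_Lie br.
Proof.
move=> /preLie_bracketE PL; split=> [x | x y z]; first by rewrite /lie_bracket subrr.
rewrite {1 3 5}/lie_bracket !PL /lie_bracket !(bilinear_opBr circL); dual_ring.
Qed.

Section Compat.
Hypothesis dotC : forall x y, dot x y = dot y x.
Hypotheses (C1 : tcpd_compat1) (C2 : tcpd_compat2).

Lemma scale2_dot_bracket x y z :
  2%:R *: dot z (br x y) = 2%:R *: circ y (dot z x) - 2%:R *: circ x (dot z y).
Proof.
rewrite dotC (bilinear_opBl dotL) scalerBr C2 C1 C1 (dotC y x).
by rewrite opprD addrACA subrr add0r.
Qed.

Lemma tpa_compat_defect x y z :
  2%:R *: dot z (br x y) - (br (dot z x) y + br x (dot z y)) =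
  3%:R *: circ y (dot z x) - 3%:R *: circ x (dot z y) - circ (dot z x) y + circ (dot z y) x.
Proof. by rewrite scale2_dot_bracket /lie_bracket; dual_ring. Qed.

Lemma tpa_compatE : tpa_compat <-> tcpd_compat3.
Proof.
split=> H x y z; first by rewrite -tpa_compat_defect H subrr.
by apply/eqP; rewrite -subr_eq0 tpa_compat_defect H.
Qed.

End Compat.

Local Notation mu := (fun x => - dual_op (Lop dot) x).
Local Notation rho := (dual_op (Lop circ)).

Local Ltac eval_dual :=
  rewrite ?oppr_eq0 ?oner_eq0 // !(lfun_simp, dual_LopE dotL, dual_LopE circL)
    ?(raddfB, raddfD) ?linearZ /= ?scaler_nat; ring.

Lemma rep_mu_mulE : (forall x y, mu (dot x y) = (mu x \o mu y)%VF) <->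
  (forall x y u, dot (dot x y) u = dot y (dot x u)).
Proof.
apply: (@dual_endo_eq2 _ _ 1 _ _ (fun x y => dot (dot x y)) (fun x y u => dot y (dot x u)))
  => [|x y f u|x y f u]; eval_dual.
Qed.

Lemma rep_rho_bracketE :
  (forall x y, rho (br x y) = (rho x \o rho y)%VF - (rho y \o rho x)%VF) <->
  (forall x y u, circ (br x y) u = circ x (circ y u) - circ y (circ x u)).
Proof.
apply: (@dual_endo_eq2 _ _ (-1) _ _ (fun x y => circ (br x y))
          (fun x y u => circ x (circ y u) - circ y (circ x u)))
  => [|x y f u|x y f u]; eval_dual.
Qed.

Lemma rep_mu_rhoE :
  (forall x y, 2%:R *: (mu x \o rho y)%VF = rho (dot x y) + (rho y \o mu x)%VF) <->
  (forall x y u, 2%:R *: circ y (dot x u) = circ (dot x y) u + dot x (circ y u)).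
Proof.
apply: (@dual_endo_eq2 _ _ (-1) _ _ (fun x y u => 2%:R *: circ y (dot x u))
          (fun x y u => circ (dot x y) u + dot x (circ y u)))
  => [|x y f u|x y f u]; eval_dual.
Qed.

Lemma rep_mu_bracketE :
  (forall x y, 2%:R *: mu (br x y) = (rho x \o mu y)%VF - (rho y \o mu x)%VF) <->
  (forall x y u, 2%:R *: dot (br x y) u = dot x (circ y u) - dot y (circ x u)).
Proof.
apply: (@dual_endo_eq2 _ _ 1 _ _ (fun x y u => 2%:R *: dot (br x y) u)
          (fun x y u => dot x (circ y u) - dot y (circ x u)))
  => [|x y f u|x y f u]; eval_dual.
Qed.

Lemma dual_TPA_repE : comm_assoc dot ->
  is_TPA_rep dot br mu rho <-> [/\ is_preLie circ, tcpd_compat1 & tcpd_compat2].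
Proof.
move=> [dotC dotA]; split.
  move=> [_ [_ [_ [/rep_rho_bracketE PL [/rep_mu_rhoE R3 /rep_mu_bracketE R4]]]]].
  split; first exact/preLie_bracketE.
    by move=> x y z; rewrite [dot y z]dotC R3.
  by move=> x y z; rewrite -scalerBr -(bilinear_opBl dotL) R4.
move=> [PL C1 C2]; split; [|split; [|split; [|split; [|split]]]].
- exact: opp_dual_Lop_linear.
- exact: dual_Lop_linear.
- by apply/rep_mu_mulE => x y u; rewrite [dot x y]dotC dotA.
- exact/rep_rho_bracketE/preLie_bracketE.
- by apply/rep_mu_rhoE => x y u; rewrite [dot x u]dotC C1.
- by apply/rep_mu_bracketE => x y u; rewrite (bilinear_opBl dotL) scalerBr C2.
Qed.

End TCPD.

Theorem mainTheorem17 (K : fieldType) (A : vectType K)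
  (dot circ : A -> A -> A) :
  [pchar K] =i pred0 ->
  bilinear_op dot -> bilinear_op circ ->
  let br := fun x y => circ x y - circ y x in
  ((is_TPA dot br /\ is_preLie circ /\
    is_TPA_rep dot br (fun x => - dual_op (Lop dot) x) (dual_op (Lop circ)))
     -> is_TCPD dot circ) /\
  (is_TCPD dot circ ->
    is_TPA dot br /\
    is_TPA_rep dot br (fun x => - dual_op (Lop dot) x) (dual_op (Lop circ))).
Proof.
move=> _ dotL circL br; split.
  move=> [[dotCA [_ compat]] [PL rep]].
  have [_ C1 C2] := (dual_TPA_repE dotL circL dotCA).1 rep.
  have C3 := (tpa_compatE dotL dotCA.1 C1 C2).1 compat.
  by split; [|split; [|split; [|split]]].
move=> [dotCA [PL [C1 [C2 C3]]]]; split.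
  split; [by [] | split]; first exact: (preLie_Lie circL PL).
  exact/(tpa_compatE dotL dotCA.1 C1 C2).
exact/(dual_TPA_repE dotL circL dotCA).
Qed.
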